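(* There is an absolute constant $\kappa>0$ such that for all positive integers $c$ and $n$, every collection $\mathcal{D}$ of $n$ distinct unit disks in the plane in which at most $c$ disks have a point in common admits a stacking order $f$ with $$\mathrm{vis}(\mathcal{D},f)\ge \kappa\, \frac{v(c)\, n}{c}.$$ Moreover, this bound is asymptotically tight in the worst case: there is an absolute constant $K>0$ such that for all positive integers $c$ and $m$ there is a collection $\mathcal{D}$ of $n=mc$ distinct unit disks, at most $c$ of which have a point in common, such that $\mathrm{vis}(\mathcal{D},f)\le K\, v(c)\, n/c$ for every stacking order $f$ of $\mathcal{D}$.
   Context: A unit disk is a closed disk of radius $1$ in the plane. A stacking order of a finite collection $\mathcal{D}$ of $n$ distinct unit disks is a bijection $f:\mathcal{D}\to\{1,\dots,n\}$; $f(D)$ is regarded as the height of $D$, and the arrangement is viewed from below. A point $x$ on the boundary circle of $D\in\mathcal{D}$ is visible if $x$ does not lie in any disk $D'\in\mathcal{D}$ with $f(D')<f(D)$. The visible perimeter $\mathrm{vis}(\mathcal{D},f)$ is the total length of all visible boundary points, summed over all disks of $\mathcal{D}$. For a positive integer $k$, $v(k)=\inf_{|\mathcal{D}|=k}\max_f \mathrm{vis}(\mathcal{D},f)$, the infimum over all collections $\mathcal{D}$ of $k$ distinct unit disks in the plane and the maximum over all stacking orders $f$ of $\mathcal{D}$. *)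

From HB Require Import structures.
From mathcomp Require Import all_boot all_order all_algebra all_fingroup.
From mathcomp Require Import all_classical all_reals all_analysis.
From mathcomp Require Import Rstruct.
Set Implicit Arguments. Unset Strict Implicit. Unset Printing Implicit Defensive.
Import Order.TTheory GRing.Theory Num.Theory.
Local Open Scope classical_set_scope.
Local Open Scope ring_scope.

Notation Reals_R := Rdefinitions.R.

(* A point of the plane. A unit disk is represented by its center. *)
Definition Pt := (Reals_R * Reals_R)%type.

Definition in_udisk (p x : Pt) : Prop :=
  (x.1 - p.1) ^+ 2 + (x.2 - p.2) ^+ 2 <= 1.

Definition circ_pt (p : Pt) (t : Reals_R) : Pt := (p.1 + cos t, p.2 + sin t).

(* A collection of n distinct unit disks: injective C : 'I_n -> Pt (centers).
   A stacking order: a bijection 'I_n -> 'I_n, i.e. f : {perm 'I_n}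
   (heights 0..n-1 instead of 1..n; only the relative order matters). *)

Definition visible_angles n (C : 'I_n -> Pt) (f : {perm 'I_n}) (i : 'I_n)
  : set Reals_R :=
  [set t | 0 <= t < 2 * pi /\
           forall j : 'I_n, (f j < f i)%N -> ~ in_udisk (C j) (circ_pt (C i) t)].

(* visible perimeter: arc length (Lebesgue measure of angle set, unit radius) *)
Definition vis n (C : 'I_n -> Pt) (f : {perm 'I_n}) : Reals_R :=
  \sum_(i < n) fine (@lebesgue_measure Reals_R (visible_angles C f i)).

(* max over stacking orders (vis >= 0, so 0 is a harmless neutral element) *)
Definition maxvis n (C : 'I_n -> Pt) : Reals_R :=
  \big[Num.max/0]_(f : {perm 'I_n}) vis C f.

Definition v (k : nat) : Reals_R :=
  inf [set maxvis C | C in [set C : 'I_k -> Pt | injective C]].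

Definition depth_le n (C : 'I_n -> Pt) (c : nat) : Prop :=
  forall x : Pt, (#|[set i : 'I_n | `[< in_udisk (C i) x >]]| <= c)%N.

From mathcomp Require Import all_boot all_order all_algebra all_fingroup.
From mathcomp Require Import all_classical all_reals all_analysis.
From mathcomp Require Import Rstruct.
From mathcomp Require Import ring lra zify.
Set Implicit Arguments. Unset Strict Implicit. Unset Printing Implicit Defensive.
Import Order.TTheory GRing.Theory Num.Theory.
Local Open Scope ring_scope.

(* Lower bound: tile the plane by the half-open squares of side 1/2. The disks
   centred in one square all contain its centre, so there are k <= c of them,
   and since about c/k far-apart copies of them form a configuration of c disks,
   they can be stacked with visible perimeter at least k v(c) / (2c). Colour
   the squares by their coordinates mod 5: disks centred in distinct squares of
   the same colour are too far apart for a boundary point of one to lie in the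
   other. Stacking the squares of the most popular colour (at least n/25 disks)
   at the bottom, each square optimally, and all other disks on top gives
   visible perimeter at least v(c) n / (50 c).
   Upper bound: m far-apart translates of a configuration of c disks whose
   maximal visible perimeter is at most 2 v(c). *)

Local Open Scope classical_set_scope.

Definition angles : set Reals_R := `[0, 2 * pi[.

Definition arclen (A : set Reals_R) : Reals_R := fine (lebesgue_measure A).

Lemma lebesgue_measure_le (A B : set Reals_R) : A `<=` B ->
  (lebesgue_measure A <= lebesgue_measure B :> \bar Reals_R)%E.
Proof. by move=> AB; exact: le_outer_measure. Qed.

Lemma lebesgue_measure_angles : lebesgue_measure angles = (2 * pi)%:E.
Proof.
rewrite lebesgue_measure_itv /= ifT ?sube0 //.
by rewrite lte_fin mulr_gt0 ?pi_gt0.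
Qed.

Lemma arclen_ge0 (A : set Reals_R) : 0 <= arclen A.
Proof. exact/fine_ge0/measure_ge0. Qed.

Lemma arclen_angles : arclen angles = 2 * pi.
Proof. by rewrite /arclen lebesgue_measure_angles. Qed.

Lemma le_arclen (A B : set Reals_R) : A `<=` B -> B `<=` angles ->
  arclen A <= arclen B.
Proof.
have fin X : X `<=` angles -> lebesgue_measure X \is a fin_num.
  move=> Xa; rewrite ge0_fin_numE ?measure_ge0 //.
  by rewrite (le_lt_trans (lebesgue_measure_le Xa)) // lebesgue_measure_angles ltry.
move=> AB Ba; apply: fine_le; rewrite ?fin //; last exact: lebesgue_measure_le.
exact: subset_trans Ba.
Qed.

Lemma visible_angles_sub n (C : 'I_n -> Pt) f i : visible_angles C f i `<=` angles.
Proof. by move=> t [/andP[t0 t2] _]; rewrite /angles /= in_itv /= t0 t2. Qed.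

Lemma vis_ge0 n (C : 'I_n -> Pt) f : 0 <= vis C f.
Proof. by apply: sumr_ge0 => i _; exact: arclen_ge0. Qed.

Lemma vis_ge_2pi n (C : 'I_n -> Pt) f : (0 < n)%N -> 2 * pi <= vis C f.
Proof.
move=> n0; pose i0 := (f^-1)%g (Ordinal n0).
have fi0 : f i0 = Ordinal n0 by rewrite /i0 permKV.
have bottom_visible : visible_angles C f i0 = angles.
  apply/seteqP; split; first exact: visible_angles_sub.
  move=> t t_angle; split; first by move: t_angle; rewrite /angles /= in_itv.
  by move=> j; rewrite fi0.
rewrite /vis (bigD1 i0) //= -[X in X <= _]addr0 -arclen_angles -bottom_visible.
by rewrite lerD // sumr_ge0 // => i _; exact: arclen_ge0.
Qed.

Lemma le_vis_maxvis n (C : 'I_n -> Pt) f : vis C f <= maxvis C.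
Proof. exact: le_bigmax. Qed.

Lemma maxvis_ge0 n (C : 'I_n -> Pt) : 0 <= maxvis C.
Proof. exact: le_trans (vis_ge0 C 1%g) (le_vis_maxvis C 1%g). Qed.

Lemma maxvis_attained n (C : 'I_n -> Pt) : exists f, maxvis C <= vis C f.
Proof.
rewrite /maxvis (bigmax_eq_arg 0 (1%g : {perm 'I_n})) //; last by move=> f _; exact: vis_ge0.
by eexists; exact: lexx.
Qed.

Local Close Scope classical_set_scope.

Section PermOfKey.
Variables (n : nat) (key : 'I_n -> nat).
Hypothesis key_inj : injective key.

Let below i : {set 'I_n} := [set j | (key j < key i)%N]%SET.

Let card_below_lt i : (#|below i| < n)%N.
Proof.
have : below i \subset [set~ i]%SET.
  by apply/fintype.subsetP=> j; rewrite !inE; apply: contraTneq => ->; rewrite ltnn.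
move/subset_leq_card; rewrite cardsC1 card_ord => /leq_ltn_trans; apply.
by rewrite ltn_predL (leq_ltn_trans _ (ltn_ord i)).
Qed.

Let card_below_mono i j : (key j < key i)%N -> (#|below j| < #|below i|)%N.
Proof.
move=> ji; apply/proper_card/properP; split.
  by apply/fintype.subsetP=> x; rewrite !inE => /ltn_trans; apply.
by exists j; rewrite !inE ?ji ?ltnn.
Qed.

Let rank i : 'I_n := Ordinal (card_below_lt i).

Let rank_inj : injective rank.
Proof.
move=> i j /(congr1 val) /= e; apply: key_inj.
by case: (ltngtP (key i) (key j)) => // /card_below_mono; rewrite e ltnn.
Qed.

Lemma exists_perm_of_key :
  exists F : {perm 'I_n}, forall i j, (F j < F i)%N = (key j < key i)%N.
Proof.
exists (perm rank_inj) => i j; rewrite !permE /=.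
case: (ltnP (key j) (key i)) => [|ij]; first exact: card_below_mono.
apply/negbTE; rewrite -leqNgt; apply: subset_leq_card.
by apply/fintype.subsetP=> x; rewrite !inE => /leq_trans; apply.
Qed.

End PermOfKey.

Definition maxvis_set k :=
  [set maxvis C | C in [set C : 'I_k -> Pt | injective C]]%classic.

Lemma maxvis_set_lbound k : has_lbound (maxvis_set k).
Proof. by exists 0 => _ [C _ <-]; exact: maxvis_ge0. Qed.

Lemma maxvis_set_neq0 k : (maxvis_set k !=set0)%classic.
Proof.
pose C (l : 'I_k) : Pt := ((l : nat)%:R, 0).
exists (maxvis C); exists C => //.
by move=> a b [] /eqP; rewrite eqr_nat => /eqP /val_inj.
Qed.

Lemma v_le_maxvis k (C : 'I_k -> Pt) : injective C -> v k <= maxvis C.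
Proof. by move=> iC; apply: (ge_inf (maxvis_set_lbound k)); exists C. Qed.

Lemma v_ge_2pi k : (0 < k)%N -> 2 * pi <= v k.
Proof.
move=> k0; apply: lb_le_inf; first exact: maxvis_set_neq0.
by move=> _ [C _ <-]; apply: le_trans (le_vis_maxvis C 1%g); exact: vis_ge_2pi.
Qed.

Lemma v_ge0 k : (0 < k)%N -> 0 <= v k.
Proof. by move/v_ge_2pi; apply: le_trans; rewrite mulr_ge0 ?pi_ge0. Qed.

Lemma v_almost_attained k : (0 < k)%N ->
  exists C : 'I_k -> Pt, injective C /\ maxvis C <= 2 * v k.
Proof.
move=> k0; have vk0 : 0 < v k.
  by apply: lt_le_trans (v_ge_2pi k0); rewrite mulr_gt0 ?pi_gt0.
have [_ [C iC <-] close] :=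
  inf_adherent vk0 (conj (maxvis_set_neq0 k) (maxvis_set_lbound k)).
by exists C; split => //; rewrite /v in close *; lra.
Qed.

Lemma in_udisk_circ_pt_x (p q : Pt) t :
  in_udisk p (circ_pt q t) -> `|q.1 - p.1| <= 2.
Proof.
rewrite /in_udisk /circ_pt /= => h.
have := cos_le1 t; have := cos_geN1 t.
have := sqr_ge0 (q.2 + sin t - p.2).
by rewrite ler_norml; move=> *; apply/andP; split; nra.
Qed.

Lemma in_udisk_circ_pt_y (p q : Pt) t :
  in_udisk p (circ_pt q t) -> `|q.2 - p.2| <= 2.
Proof.
rewrite /in_udisk /circ_pt /= => h.
have := sin_le1 t; have := sin_geN1 t.
have := sqr_ge0 (q.1 + cos t - p.1).
by rewrite ler_norml; move=> *; apply/andP; split; nra.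
Qed.

Lemma in_udisk_x (p x : Pt) : in_udisk p x -> `|x.1 - p.1| <= 1.
Proof.
rewrite /in_udisk => h; have := sqr_ge0 (x.2 - p.2).
by rewrite ler_norml; move=> *; apply/andP; split; nra.
Qed.

Definition shift_x (d : Reals_R) (p : Pt) : Pt := (p.1 + d, p.2).

Lemma in_udisk_shift_x d p q t :
  in_udisk (shift_x d p) (circ_pt (shift_x d q) t) <-> in_udisk p (circ_pt q t).
Proof.
rewrite /in_udisk /circ_pt /shift_x /=.
by have -> : q.1 + d + cos t - (p.1 + d) = q.1 + cos t - p.1 by ring.
Qed.

Section Copies.
Variables (k : nat) (k_gt0 : (0 < k)%N) (C : 'I_k -> Pt).
Hypothesis C_inj : injective C.

Let width : Reals_R := \sum_l `|(C l).1|.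

Let norm_x_le l : `|(C l).1| <= width.
Proof. by rewrite /width (bigD1 l) //= lerDl sumr_ge0. Qed.

Variable N : nat.

Definition copy_index (i : 'I_N) : 'I_k := Ordinal (ltn_pmod i k_gt0).

Definition copies (i : 'I_N) : Pt :=
  shift_x ((2 * width + 5) * (i %/ k)%N%:R) (C (copy_index i)).

Lemma copies_far (i j : 'I_N) :
  (i %/ k != j %/ k)%N -> 2 < `|(copies i).1 - (copies j).1|.
Proof.
move=> ne; rewrite /copies /shift_x /=.
have := norm_x_le (copy_index i); have := norm_x_le (copy_index j).
rewrite !ler_norml => /andP[? ?] /andP[? ?].
have : 0 <= width by apply: le_trans (norm_x_le (copy_index i)).
rewrite ltr_normr; case: (ltngtP (i %/ k) (j %/ k)) ne => // lt_ij _ r0.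
  have : (i %/ k).+1%:R <= (j %/ k)%:R :> Reals_R by rewrite ler_nat.
  by rewrite -addn1 natrD => ?; apply/orP; right; nra.
have : (j %/ k).+1%:R <= (i %/ k)%:R :> Reals_R by rewrite ler_nat.
by rewrite -addn1 natrD => ?; apply/orP; left; nra.
Qed.

Lemma eq_copy_index (i j : 'I_N) :
  (i %/ k = j %/ k)%N -> copy_index i = copy_index j -> i = j.
Proof.
move=> e1 /(congr1 val) /= e2; apply: val_inj.
by rewrite /= (divn_eq i k) (divn_eq j k) e1 e2.
Qed.

Lemma copies_inj : injective copies.
Proof.
move=> i j e.
have e1 : (i %/ k = j %/ k)%N.
  have [//|/copies_far] := eqVneq (i %/ k)%N (j %/ k)%N.
  by rewrite e subrr normr0 ltNge ler0n.
apply: eq_copy_index => //; apply: C_inj.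
move: e; rewrite /copies /shift_x e1 => -[ex ey].
have ex' : (C (copy_index i)).1 = (C (copy_index j)).1 by lra.
by apply: injective_projections.
Qed.

Lemma depth_copies : depth_le copies k.
Proof.
move=> x; rewrite -[k]card_ord; apply: (@leq_card_in _ _ copy_index).
move=> i j; rewrite !inE => /asboolP /in_udisk_x hi /asboolP /in_udisk_x hj.
apply: eq_copy_index; have [//|/copies_far] := eqVneq (i %/ k)%N (j %/ k)%N.
rewrite ltNge ler_norml => /negP[]; apply/andP.
by move: hi hj; rewrite !ler_norml => /andP[? ?] /andP[? ?]; split; lra.
Qed.

Section CopiesStacking.
Variable f : {perm 'I_N}.

Let q := (N %/ k).+1.

Let copy_lt (i : 'I_N) : (i %/ k < q)%N.
Proof. by rewrite ltnS leq_div2r // ltnW. Qed.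

Let copy (i : 'I_N) : 'I_q := Ordinal (copy_lt i).

Let copy_eq (i j : 'I_N) : copy i = copy j -> copy_index i = copy_index j -> i = j.
Proof. by move/(congr1 val); exact: eq_copy_index. Qed.

(* Heights of the disks of the [a]-th translate, padded injectively when the
   last translate is incomplete. *)
Let copy_key (a : 'I_q) (l : 'I_k) : nat :=
  if [pick i : 'I_N | (copy i == a) && (copy_index i == l)] is Some i
  then f i else (N + l)%N.

Let copy_key_index (i : 'I_N) : copy_key (copy i) (copy_index i) = f i.
Proof.
rewrite /copy_key; case: pickP => [j /andP[/eqP e1 /eqP e2]|/(_ i)].
  by rewrite (copy_eq e1 e2).
by rewrite !eqxx.
Qed.

Let copy_key_inj a : injective (copy_key a).
Proof.
move=> l l'; rewrite /copy_key.
case: pickP => [i /andP[/eqP e1 /eqP e2]|_];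
  case: pickP => [j /andP[/eqP e3 /eqP e4]|_].
- by move/val_inj/perm_inj => ij; rewrite -e2 -e4 ij.
- by move=> e; have := ltn_ord (f i); rewrite e ltnNge leq_addr.
- by move=> e; have := ltn_ord (f j); rewrite -e ltnNge leq_addr.
- by move/eqP; rewrite eqn_add2l => /eqP /val_inj.
Qed.

Let copy_perm a : {perm 'I_k} := sval (cid (exists_perm_of_key (@copy_key_inj a))).

Let copy_permP a l l' : (copy_perm a l' < copy_perm a l)%N = (copy_key a l' < copy_key a l)%N.
Proof. exact: (svalP (cid (exists_perm_of_key (@copy_key_inj a)))). Qed.

Let visible_angles_copies (i : 'I_N) :
  (visible_angles copies f i `<=` visible_angles C (copy_perm (copy i)) (copy_index i))%classic.
Proof.
move=> t [t_angle vis_t]; split => // l' below_i.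
have : (copy_key (copy i) l' < f i)%N by rewrite -copy_key_index -copy_permP.
rewrite /copy_key; case: pickP => [j /andP[/eqP e1 /eqP e2]|_]; last first.
  by move=> top; have := ltn_ord (f i); rewrite ltnNge (leq_trans _ (ltnW top)) ?leq_addr.
move/vis_t; rewrite /copies -e2.
have -> : (j %/ k)%N = (i %/ k)%N by move/(congr1 val): e1.
by move=> h /in_udisk_shift_x.
Qed.

Lemma vis_copies : vis copies f <= (N %/ k).+1%:R * maxvis C.
Proof.
pose h (p : 'I_q * 'I_k) := arclen (visible_angles C (copy_perm p.1) p.2).
pose split_index (i : 'I_N) := (copy i, copy_index i).
have split_inj : injective split_index.
  by move=> i j [e1 e2]; apply: eq_copy_index => //; apply: val_inj.
apply: (@le_trans _ _ (\sum_i h (split_index i))).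
  apply: ler_sum => i _; apply: le_arclen; first exact: visible_angles_copies.
  exact: visible_angles_sub.
rewrite -(big_imset _ (in2W split_inj)) /=.
apply: (@le_trans _ _ (\sum_p h p)).
  rewrite [X in _ <= X](bigID (mem [set split_index x | x in 'I_N]%SET)) /= lerDl.
  by apply: sumr_ge0 => p _; exact: arclen_ge0.
rewrite -(pair_big xpredT xpredT
  (fun a l => arclen (visible_angles C (copy_perm a) l))) /=.
apply: (@le_trans _ _ (\sum_(a < q) maxvis C)).
  by apply: ler_sum => a _; exact: le_vis_maxvis.
by rewrite sumr_const card_ord mulr_natl.
Qed.

End CopiesStacking.
End Copies.

Lemma v_le_copies k c (C : 'I_k -> Pt) : (0 < k)%N -> injective C ->
  v c <= (c %/ k).+1%:R * maxvis C.
Proof.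
move=> k0 iC; apply: le_trans (v_le_maxvis (@copies_inj _ k0 _ iC c)) _.
have [f fmax] := maxvis_attained (copies k0 C (N := c)).
exact: le_trans fmax (vis_copies k0 C f).
Qed.

Lemma v_mul_le_maxvis k c (C : 'I_k -> Pt) : (0 < k)%N -> (k <= c)%N ->
  injective C -> v c * k%:R <= 2 * c%:R * maxvis C.
Proof.
move=> k0 kc iC; have := v_le_copies c k0 iC.
have : ((c %/ k).+1 * k <= 2 * c)%N by have := leq_divM c k; rewrite mulSn; lia.
rewrite -(ler_nat Reals_R) natrM (natrM _ 2 c) => ? ?.
by have := maxvis_ge0 C; have : 0 <= k%:R :> Reals_R by []; nra.
Qed.

Lemma copies_vis_le c m : (0 < c)%N -> (0 < m)%N ->
  exists C : 'I_(m * c) -> Pt, injective C /\ depth_le C c /\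
    forall f, vis C f <= 4 * v c * m%:R.
Proof.
move=> c0 m0; have [C0 [iC0 C0_small]] := v_almost_attained c0.
exists (copies c0 C0 (N := m * c)); split; first exact: copies_inj.
split=> [|f]; first exact: depth_copies.
apply: le_trans (vis_copies c0 C0 f) _; rewrite mulnK //.
have : 1 <= m%:R :> Reals_R by rewrite ler1n.
by have := maxvis_ge0 C0; rewrite -addn1 natrD; nra.
Qed.

Lemma floor_mod5_far (u w : Reals_R) :
  Num.floor (2 * u) != Num.floor (2 * w) ->
  `|(Num.floor (2 * u) %% 5)%Z|%N = `|(Num.floor (2 * w) %% 5)%Z|%N ->
  2 < `|u - w|.
Proof.
set a := Num.floor (2 * u); set b := Num.floor (2 * w) => ne eq_mod.
have e : (a %% 5 = b %% 5)%Z.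
  by move/(congr1 Posz): eq_mod; rewrite !abszE !ger0_norm // modz_ge0.
pose d : int := (a %/ 5)%Z - (b %/ 5)%Z.
have ab : a - b = d * 5 by rewrite {1}(divz_eq a 5) {1}(divz_eq b 5) e /d; ring.
have d_ne0 : d != 0 by apply: contra ne => /eqP d0; rewrite -subr_eq0 ab d0 mul0r.
have abR : (a%:~R - b%:~R : Reals_R) = d%:~R * 5.
  by rewrite -intrB ab intrM.
have /andP[? ?] := mem_rg1_floor (2 * u); have /andP[? ?] := mem_rg1_floor (2 * w).
rewrite ltr_normr; case: (ltgtP d 0) d_ne0 => // [dlt|dgt] _; apply/orP.
  have : (d%:~R : Reals_R) <= -1 by rewrite -(intrN _ 1) ler_int -ltzD1 addNr.
  by move=> ?; right; rewrite -/a -/b in abR *; lra.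
have : (1 : Reals_R) <= d%:~R by rewrite ler1z.
by move=> ?; left; rewrite -/a -/b in abR *; lra.
Qed.

Section GridStacking.
Variables (n c : nat) (C : 'I_n -> Pt).
Hypothesis C_inj : injective C.

(* [cell i] indexes the square of side 1/2 containing the centre of disk [i]. *)
Definition cell i : int * int := (Num.floor (2 * (C i).1), Num.floor (2 * (C i).2)).

Definition colour_of (z : int * int) : 'I_5 * 'I_5 :=
  (inord `|(z.1 %% 5)%Z|, inord `|(z.2 %% 5)%Z|).

Definition colour i := colour_of (cell i).

Lemma absz_mod5_lt (z : int) : (`|(z %% 5)%Z| < 5)%N.
Proof. by rewrite -ltz_nat abszE ger0_norm ?modz_ge0 // ltz_pmod. Qed.

Lemma colour_far i j t : colour i = colour j -> cell i != cell j ->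
  ~ in_udisk (C j) (circ_pt (C i) t).
Proof.
move=> [/(congr1 val) ex /(congr1 val) ey] ne hin.
rewrite /= !inordK ?absz_mod5_lt // in ex ey.
move: ne; rewrite /cell xpair_eqE negb_and => /orP[] ne.
  by have := floor_mod5_far ne ex; rewrite ltNge (in_udisk_circ_pt_x hin).
by have := floor_mod5_far ne ey; rewrite ltNge (in_udisk_circ_pt_y hin).
Qed.

Definition cell_centre (z : int * int) : Pt :=
  ((z.1%:~R + 1/2) / 2, (z.2%:~R + 1/2) / 2).

Lemma in_udisk_cell_centre i : in_udisk (C i) (cell_centre (cell i)).
Proof.
rewrite /in_udisk /cell_centre /cell /=.
have /andP[? ?] := mem_rg1_floor (2 * (C i).1).
have /andP[? ?] := mem_rg1_floor (2 * (C i).2).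
set a := (Num.floor _)%:~R; set b := (Num.floor _)%:~R.
set x := (C i).1 in a *; set y := (C i).2 in b *.
have : ((a + 1/2)/2 - x) ^+ 2 <= 1/16 by nra.
have : ((b + 1/2)/2 - y) ^+ 2 <= 1/16 by nra.
lra.
Qed.

Definition rep i := odflt i [pick j | cell j == cell i].

Lemma cell_rep i : cell (rep i) = cell i.
Proof. by rewrite /rep; case: pickP => [j /eqP //|/(_ i)]; rewrite eqxx. Qed.

Lemma eq_rep i j : cell i = cell j -> rep i = rep j.
Proof. by move=> e; rewrite /rep e; case: pickP => [//|/(_ j)]; rewrite eqxx. Qed.

Definition cellmates r : {set 'I_n} := [set j | cell j == cell r]%SET.

Lemma mem_cellmates r : r \in cellmates r.
Proof. by rewrite inE. Qed.

Lemma mem_cellmates_rep i : i \in cellmates (rep i).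
Proof. by rewrite inE cell_rep. Qed.

Definition cellC r (l : 'I_#|cellmates r|) : Pt := C (enum_val l).
Arguments cellC : clear implicits.

Lemma cellC_inj r : injective (cellC r).
Proof. by move=> a b /C_inj /enum_val_inj. Qed.

Definition cell_index r i : 'I_#|cellmates r| := enum_rank_in (mem_cellmates r) i.

Lemma cellC_index r i : i \in cellmates r -> cellC r (cell_index r i) = C i.
Proof. by move=> h; rewrite /cellC /cell_index enum_rankK_in. Qed.

Definition cell_perm r : {perm 'I_#|cellmates r|} := sval (cid (maxvis_attained (cellC r))).

Lemma vis_cell_perm r : maxvis (cellC r) <= vis (cellC r) (cell_perm r).
Proof. exact: (svalP (cid (maxvis_attained (cellC r)))). Qed.

Variable p : 'I_5 * 'I_5.

Definition coloured : {set 'I_n} := [set i | colour i == p]%SET.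

(* Disks of colour [p] lie below all others, ordered by cell and, inside a
   cell, by the optimal order of the cell. *)
Definition stack_key i : nat :=
  if colour i == p then (rep i * n + cell_perm (rep i) (cell_index (rep i) i))%N
  else (n * n + i)%N.

Lemma stack_key_lt i : colour i == p -> (stack_key i < n * n)%N.
Proof.
move=> ci; rewrite /stack_key ci.
have := ltn_ord (cell_perm (rep i) (cell_index (rep i) i)).
have : (#|cellmates (rep i)| <= n)%N by rewrite -[X in (_ <= X)%N]card_ord max_card.
by have := ltn_ord (rep i); nia.
Qed.

Lemma stack_key_inj : injective stack_key.
Proof.
move=> i j e; have n0 : (0 < n)%N by apply: leq_ltn_trans (ltn_ord i).
case ci: (colour i == p); case cj: (colour j == p).
- have er : rep i = rep j.
    apply: val_inj; move: e; rewrite /stack_key ci cj => /(congr1 (divn^~ n)).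
    by rewrite !divnMDl // !divn_small ?addn0 // (leq_trans (ltn_ord _)) //
      -[X in (_ <= X)%N]card_ord max_card.
  move: e; rewrite /stack_key ci cj er => /addnI /val_inj /perm_inj.
  by apply: enum_rank_in_inj; [rewrite -er|]; exact: mem_cellmates_rep.
- by have := stack_key_lt ci; rewrite e /stack_key cj ltnNge leq_addr.
- by have := stack_key_lt cj; rewrite -e /stack_key ci ltnNge leq_addr.
- by move: e; rewrite /stack_key ci cj => /addnI /val_inj.
Qed.

Definition stack : {perm 'I_n} := sval (cid (exists_perm_of_key stack_key_inj)).

Lemma stackP i j : (stack j < stack i)%N = (stack_key j < stack_key i)%N.
Proof. exact: (svalP (cid (exists_perm_of_key stack_key_inj))). Qed.

Definition cell_vis i :=
  arclen (visible_angles (cellC (rep i)) (cell_perm (rep i)) (cell_index (rep i) i)).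

Lemma visible_angles_stack i : colour i == p ->
  (visible_angles (cellC (rep i)) (cell_perm (rep i)) (cell_index (rep i) i)
     `<=` visible_angles C stack i)%classic.
Proof.
move=> ci t [t_angle vis_t]; split => // j; rewrite stackP => lt_ji.
case cj: (colour j == p); last first.
  move: lt_ji; rewrite {1}/stack_key cj ltnNge => /negP[].
  exact: leq_trans (ltnW (stack_key_lt ci)) (leq_addr _ _).
have [same_cell|] := eqVneq (cell i) (cell j); last first.
  by apply: colour_far; rewrite (eqP ci) (eqP cj).
have rji : rep j = rep i by exact/esym/eq_rep.
move: lt_ji; rewrite /stack_key ci cj rji ltn_add2l => /vis_t.
rewrite !cellC_index ?mem_cellmates_rep //.
by rewrite inE -same_cell cell_rep.
Qed.

Lemma sum_cell_vis_le : \sum_(i in coloured) cell_vis i <= vis C stack.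
Proof.
rewrite /vis [X in _ <= X](bigID (mem coloured)) /= -[X in X <= _]addr0.
apply: lerD; last by apply: sumr_ge0 => i _; exact: arclen_ge0.
apply: ler_sum => i; rewrite inE => ci; apply: le_arclen.
  exact: visible_angles_stack.
exact: visible_angles_sub.
Qed.

Hypotheses (C_depth : depth_le C c) (c_gt0 : (0 < c)%N).

Lemma card_cellmates r : (#|cellmates r| <= c)%N.
Proof.
apply: leq_trans (C_depth (cell_centre (cell r))); apply: subset_leq_card.
apply/fintype.subsetP => j; rewrite !inE => /eqP e.
by apply/asboolP; rewrite -e; exact: in_udisk_cell_centre.
Qed.

Lemma vis_cell_perm_ge r :
  v c / (2 * c%:R) *+ #|cellmates r| <= vis (cellC r) (cell_perm r).
Proof.
have k0 : (0 < #|cellmates r|)%N by apply/card_gt0P; exists r; exact: mem_cellmates.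
have hv := v_mul_le_maxvis k0 (card_cellmates r) (@cellC_inj r).
have hG := vis_cell_perm r; have c0 : 0 < c%:R :> Reals_R by rewrite ltr0n.
rewrite -mulr_natr -(ler_pM2r (_ : 0 < 2 * c%:R)) ?mulr_gt0 //.
have -> : v c / (2 * c%:R) * #|cellmates r|%:R * (2 * c%:R) = v c * #|cellmates r|%:R.
  by field; rewrite lt0r_neq0.
by apply: le_trans hv _; nra.
Qed.

Lemma sum_cell_vis_ge r :
  \sum_(i in coloured | rep i == r) (v c / (2 * c%:R))
    <= \sum_(i in coloured | rep i == r) cell_vis i.
Proof.
have [i0 /andP[ci0 /eqP ri0]|none] := pickP (fun i => (i \in coloured) && (rep i == r));
  last by rewrite !big_pred0.
have rr : rep r = r by rewrite -ri0 (eq_rep (cell_rep i0)).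
have cellmatesE i : ((i \in coloured) && (rep i == r)) = (i \in cellmates r).
  rewrite !inE -ri0 cell_rep; apply/idP/idP => [/andP[_ /eqP e]|/eqP e].
    by rewrite -(cell_rep i) e cell_rep.
  by rewrite (eq_rep e) eqxx andbT /colour e; rewrite inE in ci0.
rewrite (eq_bigl _ _ cellmatesE) [X in _ <= X](eq_bigl _ _ cellmatesE).
rewrite [X in _ <= X](eq_bigr (fun i => arclen
  (visible_angles (cellC r) (cell_perm r) (cell_index r i)))); last first.
  by move=> i; rewrite inE => /eqP /eq_rep; rewrite rr /cell_vis => ->.
rewrite -(big_enum_rank (mem_cellmates r)
  (fun l => arclen (visible_angles (cellC r) (cell_perm r) l))) /=.
by rewrite sumr_const; exact: vis_cell_perm_ge.
Qed.

Lemma vis_stack_ge : v c / (2 * c%:R) *+ #|coloured| <= vis C stack.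
Proof.
apply: le_trans sum_cell_vis_le; rewrite -sumr_const.
rewrite (partition_big rep xpredT) // [X in _ <= X](partition_big rep xpredT) //=.
by apply: ler_sum => r _; exact: sum_cell_vis_ge.
Qed.

End GridStacking.

Lemma exists_popular_colour n (C : 'I_n -> Pt) :
  exists p, (n <= 25 * #|coloured C p|)%N.
Proof.
pose m := (\max_(q : 'I_5 * 'I_5) #|coloured C q|)%N.
have [p mp] : exists p, m = #|coloured C p|.
  by exists [arg max_(i > (ord0, ord0)) #|coloured C i|]%N; exact: bigop.bigmax_eq_arg.
exists p; rewrite -mp.
have -> : n = (\sum_(q : 'I_5 * 'I_5) #|coloured C q|)%N.
  rewrite -{1}[n]card_ord -bigop.sum1_card (partition_big (@colour n C) xpredT) //=.
  by apply: eq_bigr => q _; rewrite -bigop.sum1_card; apply: eq_bigl => i; rewrite inE.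
have : (\sum_(q : 'I_5 * 'I_5) #|coloured C q| <= \sum_(q : 'I_5 * 'I_5) m)%N.
  by apply: leq_sum => q _; exact: (bigop.leq_bigmax q).
by rewrite bigop.sum_nat_const card_prod card_ord.
Qed.

Lemma exists_stacking_vis_ge n c (C : 'I_n -> Pt) : (0 < c)%N ->
  injective C -> depth_le C c ->
  exists f : {perm 'I_n}, v c * n%:R / (50 * c%:R) <= vis C f.
Proof.
move=> c0 iC dC; have [p np] := exists_popular_colour C.
exists (stack C p); apply: le_trans (vis_stack_ge iC p dC c0).
have c0R : 0 < c%:R :> Reals_R by rewrite ltr0n.
have npR : n%:R <= 25 * #|coloured C p|%:R :> Reals_R by rewrite -natrM ler_nat.
have -> : v c * n%:R / (50 * c%:R) = v c / (2 * c%:R) * (n%:R / 25).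
  by field; rewrite lt0r_neq0.
rewrite -[_ *+ #|_|]mulr_natr; apply: ler_wpM2l.
  by rewrite divr_ge0 ?mulr_ge0 ?v_ge0.
by rewrite ler_pdivrMr //; lra.
Qed.

Theorem theorem6 :
  (exists kappa : Reals_R, 0 < kappa /\
     forall (c n : nat), (0 < c)%N -> (0 < n)%N ->
     forall C : 'I_n -> Pt, injective C -> depth_le C c ->
     exists f : {perm 'I_n}, kappa * v c * n%:R / c%:R <= vis C f)
  /\
  (exists K : Reals_R, 0 < K /\
     forall (c m : nat), (0 < c)%N -> (0 < m)%N ->
     exists C : 'I_(m * c) -> Pt, injective C /\ depth_le C c /\
       forall f : {perm 'I_(m * c)}, vis C f <= K * v c * (m * c)%:R / c%:R).
Proof.
split.
  exists (1 / 50); split=> // c n c0 _ C iC dC.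
  have [f vis_f] := exists_stacking_vis_ge c0 iC dC.
  exists f; suff -> : 1 / 50 * v c * n%:R / c%:R = v c * n%:R / (50 * c%:R) by [].
  by field; rewrite pnatr_eq0 -lt0n.
exists 4; split=> // c m c0 m0.
have [C [iC [dC vis_C]]] := copies_vis_le c0 m0.
exists C; split=> //; split=> // f; apply: le_trans (vis_C f) _.
by rewrite natrM mulrA mulfK ?pnatr_eq0 -?lt0n.
Qed.
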